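(* Let $A \ge B \ge C \ge 1$ be integers, $e=A+B+C-3$, $m=\lfloor\frac{e-1}{2}\rfloor$, and let $\Bbbk$ be a field. For $0\le r\le e$ let $U_r : R_r \to R_{r+1}$ be multiplication by $x+y+z$ on the degree-$r$ component of $R=\Bbbk[x,y,z]/(x^A,y^B,z^C)$. Then the maps $U_r$ for all $0\le r \le m$ are injective if and only if $U_m$ is injective.
   Context: $R$ is graded by total degree, $R_r$ denotes its degree-$r$ homogeneous component (spanned by the monomials $x^iy^jz^k$ with $i<A$, $j<B$, $k<C$, $i+j+k=r$). *)

From HB Require Import structures.
From mathcomp Require Import all_boot all_order all_algebra.
Set Implicit Arguments. Unset Strict Implicit. Unset Printing Implicit Defensive.
Import Order.TTheory GRing.Theory Num.Theory.
Local Open Scope ring_scope.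

(* Monomials x^i y^j z^k of R = K[x,y,z]/(x^A,y^B,z^C): i<A, j<B, k<C.
   They form a K-basis of R; an element of R is its coefficient vector. *)
Definition mon (A B C : nat) := ('I_A * 'I_B * 'I_C)%type.

Definition mdeg A B C (t : mon A B C) : nat := (t.1.1 + t.1.2 + t.2)%N.

(* f lies in the homogeneous component R_r (r : int; R_r = 0 for r < 0). *)
Definition in_R (K : fieldType) A B C (r : int) (f : {ffun mon A B C -> K}) :=
  forall t, f t != 0 -> (mdeg t)%:Z = r.

(* Multiplication by x + y + z on R, in the monomial basis
   (monomials leaving the box vanish in the quotient). *)
Definition mulxyz (K : fieldType) A B C (f : {ffun mon A B C -> K})
  : {ffun mon A B C -> K} :=
  [ffun t : mon A B C =>
     (\sum_(s : mon A B C | [&& s.1.1.+1 == t.1.1 :> nat,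
                                s.1.2 == t.1.2 :> nat & s.2 == t.2 :> nat]) f s)
   + (\sum_(s : mon A B C | [&& s.1.1 == t.1.1 :> nat,
                                s.1.2.+1 == t.1.2 :> nat & s.2 == t.2 :> nat]) f s)
   + (\sum_(s : mon A B C | [&& s.1.1 == t.1.1 :> nat,
                                s.1.2 == t.1.2 :> nat & s.2.+1 == t.2 :> nat]) f s)].

Definition U_injective (K : fieldType) A B C (r : int) :=
  forall f g : {ffun mon A B C -> K},
    in_R r f -> in_R r g -> mulxyz f = mulxyz g -> f = g.

From HB Require Import structures.
From mathcomp Require Import all_boot all_order all_algebra.
From mathcomp Require Import zify ring.
Set Implicit Arguments. Unset Strict Implicit. Unset Printing Implicit Defensive.
Import Order.TTheory GRing.Theory Num.Theory.
Local Open Scope ring_scope.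

(* Multiplication by l = x + y + z commutes with multiplication by x, y and z.
   So if f in R_r is killed by l, so are xf, yf, zf in R_(r+1); when U_(r+1) is
   injective these vanish, i.e. f lies in the socle of R, which is concentrated
   in the top degree e.  Hence injectivity of U_(r+1) implies that of U_r for
   r < e, and one descends from m < e.  Elements of R are handled as arrays of coefficients indexed by
   exponent triples, on which multiplication by a monomial is a shift. *)

Section Lefschetz.
Variables (K : fieldType) (A B C : nat).

Notation mon := (mon A B C).
Notation array := (nat -> nat -> nat -> K).

Definition in_box (i j k : nat) := [&& (i < A)%N, (j < B)%N & (k < C)%N].

(* Multiplication by x^a y^b z^c; exponents leaving the box vanish in R. *)
Definition shift (a b c : nat) (H : array) : array := fun i j k =>
  if [&& in_box i j k, (a <= i)%N, (b <= j)%N & (c <= k)%N]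
  then H (i - a)%N (j - b)%N (k - c)%N else 0.

Definition amulxyz (H : array) : array := fun i j k =>
  shift 1 0 0 H i j k + shift 0 1 0 H i j k + shift 0 0 1 H i j k.

Definition supported (H : array) := forall i j k, ~~ in_box i j k -> H i j k = 0.

Definition homog (n : nat) (H : array) :=
  forall i j k, H i j k != 0 -> (i + j + k)%N = n.

Definition in_ker (n : nat) (H : array) :=
  [/\ supported H, homog n H & forall i j k, amulxyz H i j k = 0].

Definition ainjective (n : nat) :=
  forall H, in_ker n H -> forall i j k, H i j k = 0.

Lemma in_box_sub a b c i j k : in_box i j k -> in_box (i - a) (j - b) (k - c).
Proof. by rewrite /in_box => /and3P[*]; apply/and3P; split; lia. Qed.

Lemma shift_shift a b c a' b' c' H i j k :
  shift a b c (shift a' b' c' H) i j k = shift (a + a') (b + b') (c + c') H i j k.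
Proof.
rewrite /shift; case box_ijk: (in_box i j k) => //=.
rewrite in_box_sub //= !subnDA.
case: (leqP a i) => ai; case: (leqP b j) => bj; case: (leqP c k) => ck //=;
  case: (leqP a' (i - a)) => ai'; case: (leqP b' (j - b)) => bj';
  case: (leqP c' (k - c)) => ck' //=;
  by rewrite ?andbF //; case: ifP => //; lia.
Qed.

Lemma shift_add a b c (H1 H2 : array) i j k :
  shift a b c (fun i j k => H1 i j k + H2 i j k) i j k
  = shift a b c H1 i j k + shift a b c H2 i j k.
Proof. by rewrite /shift; case: ifP; rewrite ?addr0. Qed.

Lemma amulxyz_shift a b c H i j k :
  amulxyz (shift a b c H) i j k = shift a b c (amulxyz H) i j k.
Proof.
by rewrite /amulxyz !shift_add !shift_shift !addn0 !add0n !addn1 !add1n.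
Qed.

Lemma in_ker_shift a b c n H :
  in_ker n H -> in_ker (n + a + b + c) (shift a b c H).
Proof.
case=> H_supp H_homog H_ker; split.
- by move=> i j k /negbTE box_ijk; rewrite /shift box_ijk.
- move=> i j k; rewrite /shift; case: ifP => [|_]; last by rewrite eqxx.
  by case/and4P=> _ ai bj ck /H_homog; lia.
- by move=> i j k; rewrite amulxyz_shift /shift H_ker; case: ifP.
Qed.

(* An element killed by x, y and z lies in the socle of R, spanned by
   x^(A-1) y^(B-1) z^(C-1). *)
Lemma socle_homog H :
  supported H -> (forall i j k, shift 1 0 0 H i j k = 0) ->
  (forall i j k, shift 0 1 0 H i j k = 0) ->
  (forall i j k, shift 0 0 1 H i j k = 0) ->
  homog (A + B + C - 3) H.
Proof.
move=> H_supp Hx Hy Hz i j k Hijk.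
have /and3P[iA jB kC] : in_box i j k by apply: contraNT Hijk => /H_supp ->.
have iA' : (A <= i.+1)%N.
  rewrite leqNgt; apply: contra Hijk => iA'; rewrite -(Hx i.+1 j k).
  by rewrite /shift /in_box iA' jB kC subn1 !subn0.
have jB' : (B <= j.+1)%N.
  rewrite leqNgt; apply: contra Hijk => jB'; rewrite -(Hy i j.+1 k).
  by rewrite /shift /in_box iA jB' kC subn1 !subn0.
have kC' : (C <= k.+1)%N.
  rewrite leqNgt; apply: contra Hijk => kC'; rewrite -(Hz i j k.+1).
  by rewrite /shift /in_box iA jB kC' subn1 !subn0.
lia.
Qed.

Lemma ainjective_pred n :
  ainjective n.+1 -> (n < A + B + C - 3)%N -> ainjective n.
Proof.
move=> inj n_lt_e H H_ker; have [H_supp H_homog _] := H_ker.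
have shift_eq0 a b c : (a + b + c = 1)%N -> forall i j k, shift a b c H i j k = 0.
  by move=> abc; apply: inj; rewrite -addn1 -abc !addnA; apply: in_ker_shift.
have H_top := socle_homog H_supp (shift_eq0 1 0 0 erefl)
  (shift_eq0 0 1 0 erefl) (shift_eq0 0 0 1 erefl).
move=> i j k; apply/eqP; apply: contraTT n_lt_e => Hijk.
by rewrite -(H_homog _ _ _ Hijk) (H_top _ _ _ Hijk) ltnn.
Qed.

Lemma ainjective_le n N :
  (n <= N)%N -> (N < A + B + C - 3)%N -> ainjective N -> ainjective n.
Proof.
move=> /subnKC <-; elim: (N - n)%N => [|d IH]; rewrite ?addn0 //.
rewrite addnS => lt_e inj.
exact: IH (ltnW lt_e) (ainjective_pred inj (ltnW lt_e)).
Qed.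

Definition coef (f : {ffun mon -> K}) : array := fun i j k =>
  \sum_(s : mon | [&& s.1.1 == i :> nat, s.1.2 == j :> nat & s.2 == k :> nat]) f s.

Definition ffun_of (H : array) : {ffun mon -> K} :=
  [ffun t : mon => H t.1.1 t.1.2 t.2].

Lemma coefE f (t : mon) : coef f t.1.1 t.1.2 t.2 = f t.
Proof.
rewrite /coef (big_pred1 t) // => -[[a b] c].
by case: t => [[a' b'] c']; rewrite /= !xpair_eqE andbA.
Qed.

Lemma coef_box f i j k (iA : (i < A)%N) (jB : (j < B)%N) (kC : (k < C)%N) :
  coef f i j k = f (Ordinal iA, Ordinal jB, Ordinal kC).
Proof. exact: coefE (Ordinal iA, Ordinal jB, Ordinal kC). Qed.

Lemma coef_supported f : supported (coef f).
Proof.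
move=> i j k box_ijk; rewrite /coef big_pred0 // => s; apply: contraNF box_ijk.
by case/and3P=> /eqP <- /eqP <- /eqP <-; rewrite /in_box !ltn_ord.
Qed.

Lemma coef0 i j k : coef 0 i j k = 0.
Proof. by rewrite /coef big1 // => s _; rewrite ffunE. Qed.

Lemma ffun_ofK H : supported H -> forall i j k, coef (ffun_of H) i j k = H i j k.
Proof.
move=> H_supp i j k; case box_ijk: (in_box i j k); last first.
  by rewrite coef_supported ?box_ijk // H_supp ?box_ijk.
by case/and3P: box_ijk => iA jB kC; rewrite (coef_box _ iA jB kC) ffunE.
Qed.

Lemma amulxyz_ext H1 H2 : (forall i j k, H1 i j k = H2 i j k) ->
  forall i j k, amulxyz H1 i j k = amulxyz H2 i j k.
Proof. by move=> eq_H i j k; rewrite /amulxyz /shift !eq_H. Qed.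

Lemma coef_mulxyz (f : {ffun mon -> K}) i j k :
  coef (mulxyz f) i j k = amulxyz (coef f) i j k.
Proof.
case box_ijk: (in_box i j k); last first.
  by rewrite coef_supported ?box_ijk // /amulxyz /shift box_ijk !addr0.
case/and3P: (box_ijk) => iA jB kC.
rewrite (coef_box _ iA jB kC) ffunE /amulxyz /shift box_ijk /= !subn0 !subn1.
congr (_ + _ + _).
- case: i {iA box_ijk} => [|i]; first by rewrite big_pred0.
  exact: eq_bigl.
- case: j {jB box_ijk} => [|j]; first by rewrite big_pred0 // => s; rewrite andbF.
  exact: eq_bigl.
- case: k {kC box_ijk} => [|k];
    first by rewrite big_pred0 // => s; rewrite !andbF.
  exact: eq_bigl.
Qed.

Lemma mulxyzB (f g : {ffun mon -> K}) : mulxyz (f - g) = mulxyz f - mulxyz g.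
Proof.
have sumB (P : pred mon) :
    \sum_(s | P s) (f - g) s = \sum_(s | P s) f s - \sum_(s | P s) g s.
  by rewrite -sumrB; apply: eq_bigr => s _; rewrite !ffunE.
by apply/ffunP => t; rewrite !ffunE !sumB; ring.
Qed.

Lemma in_RB r (f g : {ffun mon -> K}) : in_R r f -> in_R r g -> in_R r (f - g).
Proof.
move=> f_in g_in t; rewrite !ffunE; have [ft0 | /f_in //] := eqVneq (f t) 0.
by rewrite ft0 sub0r oppr_eq0 => /g_in.
Qed.

Lemma U_injective_kerP r : U_injective K A B C r <->
  (forall f : {ffun mon -> K}, in_R r f -> mulxyz f = 0 -> f = 0).
Proof.
split => [inj f f_in mul0 | ker f g f_in g_in eq_fg].
  apply: inj => //; first by move=> t; rewrite ffunE eqxx.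
  by have := mulxyzB 0 0; rewrite !subrr mul0.
apply/eqP; rewrite -subr_eq0; apply/eqP.
by apply: ker; [exact: in_RB | rewrite mulxyzB eq_fg subrr].
Qed.

Lemma U_injective_neg r : r < 0 -> U_injective K A B C r.
Proof.
move=> r_lt0; apply/U_injective_kerP => f f_in _.
apply/ffunP => t; rewrite ffunE; apply/eqP; apply: contraTT r_lt0 => /f_in <-.
by rewrite -leNgt.
Qed.

Lemma U_injectiveP n : U_injective K A B C n%:Z <-> ainjective n.
Proof.
rewrite U_injective_kerP.
split => [ker H [H_supp H_homog H_ker] i j k | inj f f_in mul0].
  have -> : H i j k = coef (ffun_of H) i j k by rewrite ffun_ofK.
  suff -> : ffun_of H = 0 by rewrite coef0.
  apply: ker; first by move=> t; rewrite ffunE /mdeg => /H_homog ->.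
  apply/ffunP => t; rewrite -coefE coef_mulxyz (amulxyz_ext (ffun_ofK H_supp)).
  by rewrite H_ker ffunE.
apply/ffunP => t; rewrite -coefE ffunE; apply: inj; split.
- exact: coef_supported.
- move=> i j k; case box_ijk: (in_box i j k).
    2: by rewrite coef_supported ?box_ijk ?eqxx.
  case/and3P: box_ijk => iA jB kC; rewrite (coef_box _ iA jB kC) => /f_in.
  by rewrite /mdeg => -[].
- by move=> i j k; rewrite -coef_mulxyz mul0 coef0.
Qed.
End Lefschetz.

Theorem corollary1 (K : fieldType) (A B C : nat) :
  (1 <= C)%N -> (C <= B)%N -> (B <= A)%N ->
  let e : int := (A + B + C - 3)%N%:Z in
  let m : int := ((e - 1) %/ 2)%Z in
  (forall r : int, 0 <= r <= m -> U_injective K A B C r)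
  <-> U_injective K A B C m.
Proof.
move=> _ _ _ e m; split => [inj_all | inj_m r /andP[r_ge0 r_le_m]].
  have [m_lt0 | m_ge0] := ltP m 0; first exact: U_injective_neg.
  by apply: inj_all; rewrite m_ge0 lexx.
have m_ge0 : 0 <= m := le_trans r_ge0 r_le_m.
have m_lt_e : (`|m| < A + B + C - 3)%N.
  have := lez_floor (e - 1) (isT : 2 != 0 :> int).
  by rewrite -/m -ltz_nat gez0_abs // /e; lia.
move: inj_m; rewrite -(gez0_abs m_ge0) -(gez0_abs r_ge0) !U_injectiveP.
by apply: ainjective_le m_lt_e; rewrite -lez_nat !gez0_abs.
Qed.
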